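(* For every positive integer $n$, $C_0(n)=\lfloor n/2\rfloor+1$.
   Context: Define on triples of integers $\Gamma_{0,1}(\tau_1,\tau_2,\tau_3)=(\tau_2,\tau_3,\tau_2+\tau_3)$ and $\Gamma_{0,2}(\tau_1,\tau_2,\tau_3)=(\tau_1,\tau_3,\tau_1+\tau_3)$. For an integer $\alpha\ge1$, the $(\alpha,0)$-Euclid tree is the set of triples obtained from the root $(\alpha,\alpha,2\alpha)$ by finitely many (possibly zero) applications of $\Gamma_{0,1},\Gamma_{0,2}$; $\max T$ is the largest entry of $T$. Define $C_0(n)=\#\{T: T\text{ is on the }(\alpha,0)\text{-Euclid tree for some integer }\alpha\ge1,\ \max T=n\}+1$ (distinct triples counted). *)

From mathcomp Require Import all_boot.
Set Implicit Arguments. Unset Strict Implicit. Unset Printing Implicit Defensive.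

Definition triple := (nat * nat * nat)%type.

Definition Gamma01 (t : triple) : triple :=
  let: (t1, t2, t3) := t in (t2, t3, t2 + t3).
Definition Gamma02 (t : triple) : triple :=
  let: (t1, t2, t3) := t in (t1, t3, t1 + t3).

Inductive euclid_tree (alpha : nat) : triple -> Prop :=
| et_root : euclid_tree alpha (alpha, alpha, 2 * alpha)
| et_G01 T : euclid_tree alpha T -> euclid_tree alpha (Gamma01 T)
| et_G02 T : euclid_tree alpha T -> euclid_tree alpha (Gamma02 T).

Definition maxT (t : triple) : nat :=
  let: (t1, t2, t3) := t in maxn t1 (maxn t2 t3).

Definition counted (n : nat) (T : triple) : Prop :=
  (exists alpha, 1 <= alpha /\ euclid_tree alpha T) /\ maxT T = n.

Definition C0_is (n c : nat) : Prop :=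
  exists s : seq triple, uniq s /\ (forall T, T \in s <-> counted n T) /\ c = size s + 1.

From mathcomp Require Import all_boot.
From mathcomp Require Import zify.

(* The tree consists exactly of the triples (a, b, a + b) with 1 <= a <= b:
   both moves preserve this shape, and conversely such a triple with a < b is
   the image of (b - a, a, b) or of (a, b - a, b), whichever is again in shape,
   so running the subtractive Euclidean algorithm backwards reaches a root
   (a, a, 2a).  A counted triple with maximum n is therefore (a, n - a, n)
   with 1 <= a <= n/2. *)

Lemma euclid_tree_shape {alpha T} : euclid_tree alpha T ->
  exists a b, T = (a, b, a + b) /\ alpha <= a <= b.
Proof.
elim=> [|_ _ [a [b [-> hab]]]|_ _ [a [b [-> hab]]]].
- by exists alpha, alpha; rewrite mul2n -addnn leqnn.
- by exists b, (a + b); split=> //; lia.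
- by exists a, (a + b); split=> //; lia.
Qed.

Lemma euclid_tree_reach a b : 0 < a <= b ->
  exists2 alpha, 0 < alpha & euclid_tree alpha (a, b, a + b).
Proof.
move: {2}(a + b) (leqnn (a + b)) => k; elim: k a b => [|k IHk] a b hk hab; first lia.
have [lt_ab | gt_ab | <-] := ltngtP a b; last 2 first.
- lia.
- by exists a; [lia | rewrite addnn -mul2n; exact: et_root].
have [le_ba_a | lt_a_ba] := leqP (b - a) a.
- have [alpha ha ht] := IHk (b - a) a ltac:(lia) ltac:(lia).
  exists alpha => //; have := et_G01 ht; rewrite /= subnK //; exact: ltnW.
- have [alpha ha ht] := IHk a (b - a) ltac:(lia) ltac:(lia).
  exists alpha => //; have := et_G02 ht; rewrite /= subnKC //; exact: ltnW.
Qed.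

Lemma countedP n T :
  counted n T <-> exists2 a, 0 < a <= n./2 & T = (a, n - a, n).
Proof.
have n_halves : n = n./2.*2 + odd n by rewrite addnC odd_double_half.
split.
- move=> [[alpha [alpha_gt0 ht]] <-].
  have [a [b [-> hab]]] := euclid_tree_shape ht.
  by exists a; rewrite /maxT; [lia | congr (_, _, _); lia].
- move=> [a ha ->]; split; last by rewrite /maxT; lia.
  have [alpha alpha_gt0 ht] := @euclid_tree_reach a (n - a) ltac:(lia).
  by exists alpha; rewrite subnKC in ht; [split | lia].
Qed.

Theorem lemma3p4 (n : nat) : 0 < n -> C0_is n (n./2 + 1).
Proof.
move=> _; exists [seq (a, n - a, n) | a <- iota 1 n./2]; split; [|split].
- by rewrite map_inj_uniq ?iota_uniq // => x y [].
- move=> T; rewrite countedP; split.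
  + by move/mapP=> [a]; rewrite mem_iota add1n ltnS => ha ->; exists a.
  + by move=> [a ha ->]; apply: map_f; rewrite mem_iota add1n ltnS.
- by rewrite size_map size_iota.
Qed.
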